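(* Let $\mathcal H$ be a hypergraph and $\mathcal A$ a sub-hypergraph of $\mathcal H$. Suppose that for any $\sigma,\sigma'\in\mathcal H$, either $\sigma\cap\sigma'=\emptyset$ or $\sigma\cap\sigma'\in\mathcal H$; and that for any $\tau\in\mathcal A$ and $\tau'\in\mathcal H-\mathcal A$, either $\tau\cap\tau'=\emptyset$ or $\tau\cap\tau'\in\mathrm{bd}(\mathcal H,\mathcal A)$. Then for each $n\ge 0$, $$H_n(\mathcal H,\mathcal A)\oplus H_n(\mathcal H,\mathcal H-\mathcal A)\cong H_n(\mathcal H,\mathrm{bd}(\mathcal H,\mathcal A)).$$
   Context: A hypergraph is a finite set of nonempty finite subsets of a vertex set (hyperedges); an $n$-hyperedge has $n+1$ vertices. For $\mathcal A\subseteq\mathcal H$: $\mathcal H\setminus\mathcal A=\{\sigma\in\mathcal H:\sigma\notin\mathcal A\}$; the closed complement $\mathcal H-\mathcal A=\{\sigma\in\mathcal H:\sigma\subseteq\tau\text{ for some }\tau\in\mathcal H\setminus\mathcal A\}$; the boundary $\mathrm{bd}(\mathcal H,\mathcal A)=\mathcal A\cap(\mathcal H-\mathcal A)$. The associated simplicial complex is $\Delta\mathcal H=\{\sigma\ne\emptyset:\sigma\subseteq\tau\text{ for some }\tau\in\mathcal H\}$. Fix an abelian coefficient group $G$; chains are simplicial chains of $\Delta\mathcal H$ with coefficients in $G$ and boundary $\partial$; $G(\mathcal X)_n$ is the group of $G$-linear combinations of $n$-hyperedges of $\mathcal X$; $\mathrm{Inf}_n(\mathcal X)=G(\mathcal X)_n\cap\partial_n^{-1}(G(\mathcal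 X)_{n-1})$. Relative embedded homology: $H_n(\mathcal H,\mathcal B)=H_n(\mathrm{Inf}_*(\mathcal H)/\mathrm{Inf}_*(\mathcal B))$ for $\mathcal B\subseteq\mathcal H$. *)

From HB Require Import structures.
From mathcomp Require Import all_boot all_algebra.
From mathcomp Require Import boolp.
Set Implicit Arguments. Unset Strict Implicit. Unset Printing Implicit Defensive.
Import GRing.Theory.
Local Open Scope ring_scope.
Local Open Scope quotient_scope.

(* A pair of subgroups (Z, B) of an abelian group M; its quotient is Z/(Z ∩ B). *)
Record subgroup_pair (M : zmodType) := SubgroupPair {
  sp_Z : M -> Prop;
  sp_B : M -> Prop;
  sp_Z0 : sp_Z 0;
  sp_ZB : forall x y, sp_Z x -> sp_Z y -> sp_Z (x - y);
  sp_B0 : sp_B 0;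
  sp_BB : forall x y, sp_B x -> sp_B y -> sp_B (x - y) }.

Section QuotGroup.
Variables (M : zmodType) (S : subgroup_pair M).

Definition zcar := {x : M | `[< sp_Z S x >]}.

Definition zrel (a b : zcar) : bool := `[< sp_B S (val a - val b) >].

Lemma zrel_refl : reflexive zrel.
Proof. by move=> a; apply/asboolP; rewrite subrr; exact: sp_B0. Qed.

Lemma BN x : sp_B S x -> sp_B S (- x).
Proof. by move=> h; rewrite -sub0r; apply: sp_BB => //; exact: sp_B0. Qed.

Lemma BD x y : sp_B S x -> sp_B S y -> sp_B S (x + y).
Proof. by move=> hx hy; rewrite -[y]opprK; apply: sp_BB => //; exact: BN. Qed.

Lemma zrel_sym : symmetric zrel.
Proof.
move=> a b; apply/asboolP/asboolP => h; rewrite -opprB; exact: BN.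
Qed.

Lemma zrel_trans : transitive zrel.
Proof.
move=> b a c /asboolP h1 /asboolP h2; apply/asboolP.
have -> : val a - val c = (val a - val b) + (val b - val c) by rewrite addrA subrK.
exact: BD.
Qed.

Canonical zrel_equiv := EquivRel zrel zrel_refl zrel_sym zrel_trans.

Definition quot_group := {eq_quot zrel}.
HB.instance Definition _ := EqQuotient.on quot_group.
HB.instance Definition _ := Choice.on quot_group.

Lemma ZN x : sp_Z S x -> sp_Z S (- x).
Proof. by move=> h; rewrite -sub0r; apply: sp_ZB => //; exact: sp_Z0. Qed.
Lemma ZD x y : sp_Z S x -> sp_Z S y -> sp_Z S (x + y).
Proof. by move=> hx hy; rewrite -[y]opprK; apply: sp_ZB => //; exact: ZN. Qed.

Definition zc0 : zcar := exist _ 0 (asboolT (sp_Z0 S)).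
Definition zcadd (a b : zcar) : zcar :=
  exist _ (val a + val b) (asboolT (ZD (asboolW (valP a)) (asboolW (valP b)))).
Definition zcopp (a : zcar) : zcar :=
  exist _ (- val a) (asboolT (ZN (asboolW (valP a)))).

Definition qzero : quot_group := \pi_quot_group zc0.
Definition qadd (p q : quot_group) : quot_group := \pi_quot_group (zcadd (repr p) (repr q)).
Definition qopp (p : quot_group) : quot_group := \pi_quot_group (zcopp (repr p)).

Lemma repr_pi (a : zcar) : zrel (repr (\pi_quot_group a)) a.
Proof. by apply/eqmodP; rewrite reprK. Qed.

Lemma qaddE a b : qadd (\pi_quot_group a) (\pi_quot_group b) = \pi_quot_group (zcadd a b).
Proof.
apply/eqmodP; apply/asboolP => /=.
move: (repr_pi a) (repr_pi b) => /asboolP ha /asboolP hb.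
set x := repr _ in ha *; set y := repr _ in hb *.
have -> : val x + val y - (val a + val b) = (val x - val a) + (val y - val b).
  by rewrite opprD addrACA.
exact: BD.
Qed.

Lemma qoppE a : qopp (\pi_quot_group a) = \pi_quot_group (zcopp a).
Proof.
apply/eqmodP; apply/asboolP => /=.
move: (repr_pi a) => /asboolP ha; set x := repr _ in ha *.
rewrite -opprD; exact: BN.
Qed.

Lemma zc_eq (a b : zcar) : val a = val b -> \pi_quot_group a = \pi_quot_group b.
Proof. by move=> h; apply/eqmodP; apply/asboolP; rewrite h subrr; exact: sp_B0. Qed.

Lemma qaddA : associative qadd.
Proof.
elim/quotW=> a; elim/quotW=> b; elim/quotW=> c.
rewrite (qaddE b c) (qaddE a b) (qaddE a) qaddE.
by apply: zc_eq; rewrite /= addrA.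
Qed.
Lemma qaddC : commutative qadd.
Proof. by elim/quotW=> a; elim/quotW=> b; rewrite (qaddE a b) (qaddE b a); apply: zc_eq; rewrite /= addrC. Qed.
Lemma qadd0 : left_id qzero qadd.
Proof. by elim/quotW=> a; rewrite qaddE; apply: zc_eq; rewrite /= add0r. Qed.
Lemma qaddN : left_inverse qzero qopp qadd.
Proof. by elim/quotW=> a; rewrite qoppE qaddE; apply: zc_eq; rewrite /= addNr. Qed.

HB.instance Definition _ := GRing.isZmodule.Build quot_group qaddA qaddC qadd0 qaddN.
End QuotGroup.


Local Close Scope quotient_scope.

Section Hyper.
Variable V : finType.
Implicit Types (H X A : {set {set V}}).

Definition hypergraph H : Prop := set0 \notin H.

Definition closed_compl H A : {set {set V}} :=
  [set s in H | [exists t in H :\: A, s \subset t]].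
Definition bd H A : {set {set V}} := A :&: closed_compl H A.
Definition Delta H : {set {set V}} :=
  [set s : {set V} | (s != set0) && [exists t in H, s \subset t]].

Variable G : zmodType.
Definition chain := {ffun {set V} -> G}.

Definition vpos (s : {set V}) (v : V) : nat :=
  #|[set x in s | (enum_rank x < enum_rank v)%N]|.
Definition bsign (s t : {set V}) : nat := (\sum_(v in s :\: t) vpos s v)%N.

Definition bdry H (n : nat) (f : chain) : chain :=
  [ffun t => if t == set0 then 0 else
     \sum_(s in Delta H | (#|s| == n.+1)%N && (t \subset s) && (#|t| == n)%N)
        (if odd (bsign s t) then - f s else f s)].

Definition Gch X (n : nat) (f : chain) : Prop :=
  forall s, f s != 0 -> s \in X /\ #|s| = n.+1.

Definition Inf H X (n : nat) (f : chain) : Prop :=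
  Gch X n f /\ match n with 0 => True | n'.+1 => Gch X n' (bdry H n f) end.

Definition rel_cycle H B (n : nat) (f : chain) : Prop :=
  Inf H H n f /\ match n with 0 => True | n'.+1 => Inf H B n' (bdry H n f) end.

Definition rel_boundary H B (n : nat) (f : chain) : Prop :=
  exists g h, Inf H H n.+1 g /\ Inf H B n h /\ f = bdry H n.+1 g + h.

Lemma bdryD H n f g : bdry H n (f + g) = bdry H n f + bdry H n g.
Proof.
apply/ffunP=> t; rewrite !ffunE; case: ifP => _; first by rewrite addr0.
rewrite -big_split; apply: eq_bigr => s _; rewrite !ffunE.
by case: ifP => _ //; rewrite opprD.
Qed.
Lemma bdryN H n f : bdry H n (- f) = - bdry H n f.
Proof.
apply/ffunP=> t; rewrite !ffunE; case: ifP => _; first by rewrite oppr0.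
rewrite -sumrN; apply: eq_bigr => s _; rewrite !ffunE.
by case: ifP.
Qed.
Lemma bdryB H n f g : bdry H n (f - g) = bdry H n f - bdry H n g.
Proof. by rewrite bdryD bdryN. Qed.
Lemma bdry0 H n : bdry H n 0 = 0.
Proof.
by have := bdryB H n 0 0; rewrite subrr => {1}->; rewrite subrr. Qed.

Lemma Gch0 X n : Gch X n 0.
Proof. by move=> s; rewrite ffunE eqxx. Qed.
Lemma GchB X n f g : Gch X n f -> Gch X n g -> Gch X n (f - g).
Proof.
move=> hf hg s; rewrite !ffunE; case: (eqVneq (f s) 0) => [->|/hf //].
by rewrite sub0r oppr_eq0 => /hg.
Qed.
Lemma GchD X n f g : Gch X n f -> Gch X n g -> Gch X n (f + g).
Proof.
move=> hf hg; rewrite -[g]opprK; apply: GchB => //.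
by rewrite -sub0r; apply: GchB => //; exact: Gch0.
Qed.

Lemma Inf0 H X n : Inf H X n 0.
Proof. by split; [exact: Gch0|case: n => // n; rewrite bdry0; exact: Gch0]. Qed.
Lemma InfB H X n f g : Inf H X n f -> Inf H X n g -> Inf H X n (f - g).
Proof.
case=> h1 h2 [h3 h4]; split; first exact: GchB.
by case: n h1 h3 h2 h4 => // n _ _ h2 h4; rewrite bdryB; exact: GchB.
Qed.
Lemma InfD H X n f g : Inf H X n f -> Inf H X n g -> Inf H X n (f + g).
Proof.
move=> hf hg; rewrite -[g]opprK; apply: InfB => //.
by rewrite -sub0r; apply: InfB => //; exact: Inf0.
Qed.

Lemma rel_cycle0 H B n : rel_cycle H B n 0.
Proof. by split; [exact: Inf0|case: n => // n; rewrite bdry0; exact: Inf0]. Qed.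
Lemma rel_cycleB H B n f g :
  rel_cycle H B n f -> rel_cycle H B n g -> rel_cycle H B n (f - g).
Proof.
case=> h1 h2 [h3 h4]; split; first exact: InfB.
by case: n h1 h3 h2 h4 => // n _ _ h2 h4; rewrite bdryB; exact: InfB.
Qed.
Lemma rel_boundary0 H B n : rel_boundary H B n 0.
Proof. by exists 0, 0; split; [exact: Inf0|split; [exact: Inf0|rewrite bdry0 addr0]]. Qed.
Lemma rel_boundaryB H B n f g :
  rel_boundary H B n f -> rel_boundary H B n g -> rel_boundary H B n (f - g).
Proof.
case=> [g1 [h1 [Hg1 [Hh1 ->]]]] [g2 [h2 [Hg2 [Hh2 ->]]]].
exists (g1 - g2), (h1 - h2); split; first exact: InfB.
split; first exact: InfB.
by rewrite bdryB opprD addrACA.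
Qed.

Definition rel_pair H B (n : nat) : subgroup_pair chain :=
  SubgroupPair (rel_cycle0 H B n) (@rel_cycleB H B n)
               (rel_boundary0 H B n) (@rel_boundaryB H B n).

Definition rel_homology H B (n : nat) : zmodType := quot_group (rel_pair H B n).
End Hyper.

From HB Require Import structures.
From mathcomp Require Import all_boot all_algebra.
From mathcomp Require Import boolp.
Set Implicit Arguments. Unset Strict Implicit. Unset Printing Implicit Defensive.
Import GRing.Theory.
Local Open Scope ring_scope.

(* Write K = H - A for the closed complement
   and bd = A ∩ K.  Every chain x splits as x = P x + Q x, where P x is the
   part of x supported on A ∖ K and Q x the rest.  The geometric heart of the
   proof (split_Inf) is that, under the intersection hypothesis on A and K,
   P sends infimum chains of H to infimum chains of A and Q sends them to
   infimum chains of K; this uses ∂∂ = 0 (bdry_bdry).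
   From this, Q maps relative cycles/boundaries of (H, A) to those of (H, bd)
   and P does the same for (H, K) (rel_cycle_split, rel_boundary_split).
   An abstract splitting lemma on quotients of subgroup pairs (quot_split)
   then turns (a, b) ↦ [Q a + P b] into an additive bijection
   H_n(H, A) ⊕ H_n(H, K) ≅ H_n(H, bd), with inverse z ↦ ([z], [z]). *)

Lemma qpiD (M : zmodType) (S : subgroup_pair M) (a b : zcar S) :
  (\pi_(quot_group S) a + \pi_(quot_group S) b = \pi_(quot_group S) (zcadd a b))%qT.
Proof. exact: qaddE. Qed.

Section QuotientMap.
Local Open Scope quotient_scope.
Variables (M : zmodType) (S1 S2 : subgroup_pair M) (F : M -> M).
Hypothesis FB : forall x y, F (x - y) = F x - F y.
Hypothesis FZ : forall x, sp_Z S1 x -> sp_Z S2 (F x).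
Hypothesis FBd : forall x, sp_Z S1 x -> sp_B S1 x -> sp_B S2 (F x).

Definition zlift (a : zcar S1) : zcar S2 :=
  exist _ (F (val a)) (asboolT (FZ (asboolW (valP a)))).

Definition qmap (q : quot_group S1) : quot_group S2 :=
  \pi_(quot_group S2) (zlift (repr q)).

Lemma qmapE a : qmap (\pi_(quot_group S1) a) = \pi_(quot_group S2) (zlift a).
Proof.
apply/eqmodP/asboolP => /=; rewrite -FB; apply: FBd; last first.
  by move: (repr_pi a) => /asboolP.
have Zr := asboolW (valP (repr (\pi_(quot_group S1) a))).
by apply: sp_ZB => //; exact: (asboolW (valP a)).
Qed.

Lemma qmapD p q : qmap (p + q) = qmap p + qmap q.
Proof.
have F0 : F 0 = 0 by have := FB 0 0; rewrite subr0 => {1}->; rewrite subrr.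
have FN z : F (- z) = - F z by rewrite -sub0r FB F0 sub0r.
have FD x y : F (x + y) = F x + F y by rewrite -{1}[y]opprK FB FN opprK.
elim/quotW: p => a; elim/quotW: q => b.
by rewrite qpiD !qmapE qpiD; apply: zc_eq; rewrite /= FD.
Qed.
End QuotientMap.

Section QuotientSplitting.
Local Open Scope quotient_scope.
Variables (M : zmodType) (S1 S2 S3 : subgroup_pair M) (P Q : M -> M).
Hypothesis PB : forall x y, P (x - y) = P x - P y.
Hypothesis QB : forall x y, Q (x - y) = Q x - Q y.
Hypothesis PQ : forall x, P x + Q x = x.
Hypothesis QZ : forall x, sp_Z S1 x -> sp_Z S3 (Q x).
Hypothesis QBd : forall x, sp_Z S1 x -> sp_B S1 x -> sp_B S3 (Q x).
Hypothesis PZ : forall x, sp_Z S2 x -> sp_Z S3 (P x).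
Hypothesis PBd : forall x, sp_Z S2 x -> sp_B S2 x -> sp_B S3 (P x).
Hypothesis Z31 : forall x, sp_Z S3 x -> sp_Z S1 x.
Hypothesis Z32 : forall x, sp_Z S3 x -> sp_Z S2 x.
Hypothesis B31 : forall x, sp_B S3 x -> sp_B S1 x.
Hypothesis B32 : forall x, sp_B S3 x -> sp_B S2 x.
Hypothesis cross : forall a b, sp_Z S1 a -> sp_Z S2 b ->
  sp_B S1 (P (b - a)) /\ sp_B S2 (Q (a - b)).

Lemma quot_split : exists f : quot_group S1 * quot_group S2 -> quot_group S3,
  (forall x y, f (x + y) = f x + f y) /\ bijective f.
Proof.
have idB (x y : M) : id (x - y) = id x - id y by [].
have inj1E := qmapE idB Z31 (fun x _ => B31 (x := x)).
have inj2E := qmapE idB Z32 (fun x _ => B32 (x := x)).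
have qQE := qmapE QB QZ QBd; have qPE := qmapE PB PZ PBd.
exists (fun p => qmap QZ p.1 + qmap PZ p.2); split.
  by move=> [p1 p2] [q1 q2] /=; rewrite (qmapD QB QZ QBd) (qmapD PB PZ PBd) addrACA.
exists (fun z => (qmap (F := id) Z31 z, qmap (F := id) Z32 z)).
- move=> [p1 p2] /=; elim/quotW: p1 => a; elim/quotW: p2 => b.
  have [Za Zb] := (asboolW (valP a), asboolW (valP b)).
  have [Ba Bb] := cross Za Zb.
  rewrite qQE qPE qpiD inj1E inj2E; congr pair; apply/eqmodP/asboolP => /=.
    by rewrite -{2}(PQ (val a)) [P (val a) + _]addrC [Q _ + _]addrC addrKA -PB.
  by rewrite -{2}(PQ (val b)) addrKA -QB.
- elim/quotW=> c /=; rewrite inj1E inj2E qQE qPE qpiD.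
  by apply: zc_eq; rewrite /= addrC PQ.
Qed.
End QuotientSplitting.

Section BoundaryOperator.
Variables (V : finType) (G : zmodType) (H : {set {set V}}).
Implicit Types (r s t : {set V}) (f : chain V G).

Definition sg (k : nat) (x : G) : G := if odd k then - x else x.

Lemma sgS k x : sg k.+1 x = - sg k x.
Proof. by rewrite /sg /=; case: odd; rewrite ?opprK. Qed.

Lemma sgD i j x : sg i (sg j x) = sg (i + j) x.
Proof. by rewrite /sg oddD; case: (odd i); case: (odd j); rewrite /= ?opprK. Qed.

Lemma sg_sum (I : finType) (P : pred I) (F : I -> G) k :
  sg k (\sum_(i | P i) F i) = \sum_(i | P i) sg k (F i).
Proof. by rewrite /sg; case: odd; rewrite ?sumrN. Qed.

Lemma bdryE n f t : bdry H n f t =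
  if (t != set0) && (#|t| == n)%N then
    \sum_(s in Delta H | (#|s| == n.+1)%N && (t \subset s)) sg (bsign s t) (f s)
  else 0.
Proof.
rewrite ffunE; case: eqP => //= _; case: (eqVneq #|t| n) => tn.
  by apply: eq_bigl => s; rewrite andbT.
by rewrite big_pred0 // => s; rewrite !andbF.
Qed.

Lemma bdry_supp n f t : bdry H n f t != 0 ->
  [/\ t != set0, #|t| = n &
     exists s, [/\ s \in Delta H, #|s| = n.+1, t \subset s & f s != 0]].
Proof.
rewrite bdryE; case: ifP => [/andP[t0 /eqP tn] nz|]; last by rewrite eqxx.
have [s /andP[sD /andP[/eqP sn ts]] fs] : exists2 s,
    (s \in Delta H) && ((#|s| == n.+1)%N && (t \subset s)) & sg (bsign s t) (f s) != 0.
  apply/exists_inP; apply: contraNT nz => /exists_inPn fs0.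
  by rewrite big1 // => s /fs0; rewrite negbK => /eqP.
split => //; exists s; split => //.
by apply: contra fs => /eqP ->; rewrite /sg oppr0; case: odd.
Qed.

Lemma vpos_del_above s a b : (enum_rank a < enum_rank b)%N -> vpos (s :\ b) a = vpos s a.
Proof.
move=> ab; apply: eq_card => x; rewrite !inE.
by case: (eqVneq x b) => [->|] //=; rewrite ltnNge (ltnW ab) andbF.
Qed.

Lemma vpos_del_below s a b : a \in s -> (enum_rank a < enum_rank b)%N ->
  vpos s b = (vpos (s :\ a) b).+1.
Proof.
move=> as_ ab; rewrite /vpos (cardsD1 a) inE as_ ab /= add1n; congr S.
by apply: eq_card => x; rewrite !inE; case: (eqVneq x a).
Qed.

Lemma bsign1 s t v : s :\: t = [set v] -> bsign s t = vpos s v.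
Proof. by move=> h; rewrite /bsign h big_set1. Qed.

Lemma setD_del1 s r a b : s :\: r = [set a; b] -> a != b -> (s :\ b) :\: r = [set a].
Proof.
move=> /setP hsr ab; apply/setP=> x; move: (hsr x); rewrite !inE => hx.
case: (eqVneq x b) => [->|xb] /=; first by rewrite andbF eq_sym (negbTE ab).
by rewrite hx (negbTE xb) orbF.
Qed.

Lemma setD_del s b : b \in s -> s :\: (s :\ b) = [set b].
Proof.
move=> bs; apply/setP=> x; rewrite !inE.
by case: (eqVneq x b) => [->|] /=; rewrite ?bs ?andNb.
Qed.

(* The two ways of going from s down to r, when s ∖ r = {a, b}, carry
   opposite signs: this is the combinatorial core of ∂∂ = 0. *)
Lemma bsign_swap r s a b : s :\: r = [set a; b] -> a != b ->
  (enum_rank a < enum_rank b)%N ->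
  (bsign (s :\ b) r + bsign s (s :\ b) = (bsign (s :\ a) r + bsign s (s :\ a)).+1)%N.
Proof.
move=> hsr ab lab; have ba : b != a by rewrite eq_sym.
have /setDP[bs _] : b \in s :\: r by rewrite hsr !inE eqxx orbT.
have /setDP[as_ _] : a \in s :\: r by rewrite hsr !inE eqxx.
have hsr' : s :\: r = [set b; a] by rewrite hsr setUC.
rewrite (bsign1 (setD_del1 hsr ab)) (bsign1 (setD_del bs)).
rewrite (bsign1 (setD_del1 hsr' ba)) (bsign1 (setD_del as_)).
by rewrite (vpos_del_above s lab) (vpos_del_below as_ lab) addnS addnC.
Qed.

Lemma faces_between r s a b t : r \subset s -> s :\: r = [set a; b] -> a != b ->
  [&& t \subset s, r \subset t & #|t| == #|s|.-1]%N = (t == s :\ b) || (t == s :\ a).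
Proof.
move=> rs hsr ab.
have /setDP[bs bnr] : b \in s :\: r by rewrite hsr !inE eqxx orbT.
have /setDP[as_ anr] : a \in s :\: r by rewrite hsr !inE eqxx.
have cardD1 x : x \in s -> #|s :\ x| = #|s|.-1 by move=> xs; rewrite (cardsD1 x s) xs.
apply/idP/idP; last first.
  case/orP=> /eqP ->; rewrite subD1set subsetD1 rs.
    by rewrite bnr (cardD1 b bs) eqxx.
  by rewrite anr (cardD1 a as_) eqxx.
case/and3P=> ts rt /eqP tc.
have [x xs xnt] : exists2 x, x \in s & x \notin t.
  apply/subsetPn/negP => st; have := subset_leq_card st; rewrite tc.
  have : (0 < #|s|)%N by apply/card_gt0P; exists a.
  by case: #|s| => // k _; rewrite ltnn.
have : x \in s :\: r by rewrite inE xs (contra (subsetP rt x)).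
rewrite hsr !inE => /orP[] /eqP xe; subst x; rewrite !eqEcard !subsetD1 ts xnt /= tc.
  by rewrite (cardD1 a as_) leqnn orbT.
by rewrite (cardD1 b bs) leqnn.
Qed.

Lemma DeltaS s t : s \in Delta H -> t \subset s -> t != set0 -> t \in Delta H.
Proof.
rewrite !inE => /andP[_ /existsP[u /andP[uH su]]] ts ->.
by apply/existsP; exists u; rewrite uH (subset_trans ts su).
Qed.

Lemma pair_faces_cancel r s a b (x : G) : s :\: r = [set a; b] -> a != b ->
  \sum_(t | (t == s :\ b) || (t == s :\ a)) sg (bsign t r + bsign s t) x = 0.
Proof.
wlog lab : a b / (enum_rank a < enum_rank b)%N => [hwlog hsr ab|hsr ab].
  case: (ltngtP (enum_rank a) (enum_rank b)) => [lab|lba|/ord_inj/enum_rank_inj eab].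
  - exact: hwlog.
  - under eq_bigl => t do rewrite orbC.
    by apply: hwlog; rewrite 1?eq_sym // hsr setUC.
  - by rewrite eab eqxx in ab.
have sab : s :\ a != s :\ b.
  apply/negP=> /eqP/setP/(_ a); rewrite !inE eqxx ab /=.
  by have /setDP[-> _] : a \in s :\: r by rewrite hsr !inE eqxx.
rewrite (bigD1 (s :\ b)) ?eqxx //= (big_pred1 (s :\ a)); last first.
  by move=> t; case: (eqVneq t (s :\ b)) => [->|] /=; rewrite ?andbT // eq_sym (negbTE sab).
by rewrite (bsign_swap hsr ab lab) sgS addNr.
Qed.

(* ∂∂ = 0: after exchanging the two sums, the coefficient of f s at r
   gathers the two paths s ⊃ t ⊃ r, which cancel. *)
Lemma bdry_bdry n f : bdry H n (bdry H n.+1 f) = 0.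
Proof.
apply/ffunP=> r; rewrite bdryE ffunE.
case: ifP => // /andP[r0 /eqP rc].
case: n rc => [|m] rc; first by move: r0; rewrite -cards_eq0 rc.
under eq_bigr => t /andP[tD /andP[/eqP tc _]].
  have t0 : t != set0 by move: tD; rewrite inE => /andP[].
  rewrite bdryE t0 tc eqxx /= sg_sum.
  under eq_bigr => s _ do rewrite sgD.
  over.
rewrite (exchange_big_dep (fun s => (s \in Delta H) && (#|s| == m.+3)%N && (r \subset s))) /=;
  last by move=> t s /andP[_ /andP[_ rt]] /andP[-> /andP[-> ts]]; rewrite (subset_trans rt ts).
rewrite big1 // => s /andP[/andP[sD /eqP sc] rs].
have : #|s :\: r| == 2.
  by rewrite cardsD (setIidPr rs) sc rc subSS; elim: m {sc rc} => // k; rewrite subSS.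
case/cards2P => a [b [ab hsr]]; rewrite -[RHS](pair_faces_cancel (f s) hsr ab).
apply: eq_bigl => t; rewrite -(faces_between t rs hsr ab) sD sc eqxx /=.
apply/idP/idP => [/andP[/and3P[_ -> ->] ->] // | /and3P[ts rt ->]].
rewrite rt ts !andbT; apply: (DeltaS sD ts).
by apply: contra r0 => /eqP t0; rewrite -subset0 -t0.
Qed.
End BoundaryOperator.

Section Supports.
Variables (V : finType) (G : zmodType) (H : {set {set V}}).
Implicit Types (X Y : {set {set V}}) (x f : chain V G).

Lemma GchS X Y n f : X \subset Y -> Gch X n f -> Gch Y n f.
Proof. by move=> XY hf s /hf [sX ->]; split => //; apply: (subsetP XY). Qed.

Lemma GchI X Y n f : Gch X n f -> Gch Y n f -> Gch (X :&: Y) n f.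
Proof. by move=> hX hY s fs; have [sX ->] := hX s fs; have [sY _] := hY s fs; rewrite inE sX sY. Qed.

Lemma InfS X Y n f : X \subset Y -> Inf H X n f -> Inf H Y n f.
Proof.
move=> XY [h1 h2]; split; first exact: GchS h1.
by case: n h1 h2 => // n _; apply: GchS.
Qed.

Lemma InfI X Y n f : Inf H X n f -> Inf H Y n f -> Inf H (X :&: Y) n f.
Proof.
move=> [h1 h2] [h3 h4]; split; first exact: GchI.
by case: n h1 h2 h3 h4 => // n _ h2 _ h4; apply: GchI.
Qed.

(* Inf is preserved by ∂, because ∂∂ = 0. *)
Lemma Inf_bdry X n f : Inf H X n.+1 f -> Inf H X n (bdry H n.+1 f).
Proof. by case=> _ h; split => //; case: n h => // n _; rewrite bdry_bdry; exact: Gch0. Qed.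

Lemma Inf_rel_boundary X n f : Inf H X n f -> rel_boundary H X n f.
Proof. by move=> hf; exists 0, f; rewrite bdry0 add0r; split => //; exact: Inf0. Qed.

Lemma rel_cycle_mono X Y n f : X \subset Y -> rel_cycle H X n f -> rel_cycle H Y n f.
Proof. by move=> XY [h1 h2]; split => //; case: n f h1 h2 => // n f _; apply: InfS. Qed.

Lemma rel_boundary_mono X Y n f : X \subset Y -> rel_boundary H X n f -> rel_boundary H Y n f.
Proof. by move=> XY [g [h [hg [hh ->]]]]; exists g, h; split => //; split => //; apply: InfS hh. Qed.

Definition restr X x : chain V G := [ffun s => if s \in X then x s else 0].

Lemma restrB X x y : restr X (x - y) = restr X x - restr X y.
Proof. by apply/ffunP=> s; rewrite !ffunE; case: ifP; rewrite ?subr0. Qed.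

Lemma restr_split X x : restr X x + restr (~: X) x = x.
Proof. by apply/ffunP=> s; rewrite !ffunE inE; case: (s \in X); rewrite ?addr0 ?add0r. Qed.

(* Where ∂x vanishes, the boundaries of the two restrictions cancel. *)
Lemma restr_bdry_nz X n x t : bdry H n x t = 0 ->
  (bdry H n (restr X x) t != 0) = (bdry H n (restr (~: X) x) t != 0).
Proof.
have e : bdry H n x t = bdry H n (restr X x) t + bdry H n (restr (~: X) x) t.
  by rewrite -{1}(restr_split X x) bdryD [LHS]ffunE.
by rewrite e => /addr0_eq <-; rewrite oppr_eq0.
Qed.

Section ComplementarySplit.
Variables (X1 X2 : {set {set V}}) (P Q : chain V G -> chain V G).
Hypothesis X2H : X2 \subset H.
Hypothesis PQ : forall x, P x + Q x = x.
Hypothesis PQ_Inf :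
  forall n x, Inf H H n x -> Inf H X1 n (P x) /\ Inf H X2 n (Q x).

Lemma Q_eq_sub x : Q x = x - P x.
Proof. by rewrite -{2}(PQ x) addrC addKr. Qed.

Lemma rel_cycle_split n x : rel_cycle H X1 n x -> rel_cycle H (X1 :&: X2) n (Q x).
Proof.
case=> hx hdx; have [PX QX] := PQ_Inf hx; split; first exact: InfS X2H QX.
case: n x hx hdx PX QX => // m x hx hdx PX QX.
apply: InfI; last exact: Inf_bdry.
by rewrite Q_eq_sub bdryB; apply: InfB => //; exact: Inf_bdry.
Qed.

Lemma rel_boundary_split n x :
  rel_cycle H X1 n x -> rel_boundary H X1 n x -> rel_boundary H (X1 :&: X2) n (Q x).
Proof.
case=> hx _ [g [h [hg [hh ex]]]].
have [PX QX] := PQ_Inf hx; have [Pg Qg] := PQ_Inf hg.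
exists (Q g), (Q x - bdry H n.+1 (Q g)); split; first exact: InfS X2H Qg.
split; last by rewrite addrC subrK.
apply: InfI; last by apply: InfB => //; exact: Inf_bdry.
have -> : Q x - bdry H n.+1 (Q g) = h - P x + bdry H n.+1 (P g).
  rewrite !Q_eq_sub bdryB {1}ex; set D := bdry H n.+1 g.
  by rewrite opprB [D + h]addrC -!addrA (addrCA D) (addrC D) subrK.
by apply: InfD; [apply: InfB | exact: Inf_bdry].
Qed.
End ComplementarySplit.
End Supports.

Lemma proper_squeeze (V : finType) (t X s : {set V}) m :
  t \subset X -> X \proper s -> #|s| = m.+2 -> #|t| = m.+1 -> X = t.
Proof.
move=> tX /proper_card Xs sc tc; apply/eqP; rewrite eq_sym eqEcard tX tc /=.
by rewrite sc in Xs.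
Qed.

Section Decomposition.
Variables (V : finType) (G : zmodType) (H A : {set {set V}}).
Hypothesis hA : A \subset H.
Hypothesis h2 : forall t t', t \in A -> t' \in closed_compl H A ->
  t :&: t' = set0 \/ t :&: t' \in bd H A.
Local Notation K := (closed_compl H A).
Implicit Types (s t u : {set V}) (x : chain V G).

Lemma closed_compl_sub : K \subset H.
Proof. by apply/subsetP=> s; rewrite inE => /andP[]. Qed.

Lemma bd_subA : bd H A \subset A.
Proof. exact: subsetIl. Qed.

Lemma bd_subK : bd H A \subset K.
Proof. exact: subsetIr. Qed.

Lemma notA_in_K s : s \in H -> s \notin A -> s \in K.
Proof. by move=> sH sA; rewrite inE sH; apply/existsP; exists s; rewrite !inE sA sH subxx. Qed.

Lemma closed_compl_witness u : u \in K -> exists w, [/\ w \in H, w \notin A & u \subset w].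
Proof.
by rewrite inE => /andP[_ /existsP[w /andP[]]]; rewrite !inE => /andP[wA wH] uw; exists w.
Qed.

Lemma closed_compl_down u t : u \in K -> t \subset u -> t \in H -> t \in K.
Proof.
move=> /closed_compl_witness[w [wH wA uw]] tu tH; rewrite inE tH; apply/existsP.
by exists w; rewrite !inE wA wH (subset_trans tu uw).
Qed.

Local Notation P := (restr (A :\: K)).
Local Notation Q := (restr (~: (A :\: K))).

Lemma Gch_P n x : Gch H n x -> Gch A n (P x).
Proof.
move=> hx s; rewrite ffunE; case: ifP => [/setDP[sA _] /hx[_ ->] //|_].
by rewrite eqxx.
Qed.

Lemma Gch_Q n x : Gch H n x -> Gch K n (Q x).
Proof.
move=> hx s; rewrite ffunE; case: ifP => [sAK /hx[sH ->]|_]; last by rewrite eqxx.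
split => //; case: (boolP (s \in A)) => sA; last exact: notA_in_K.
by move: sAK; rewrite !inE sA andbT negbK.
Qed.

(* A face t of some s ∈ A ∖ K lying in H is in A by the intersection
   hypothesis; a face t outside H must also be a face of Q x, hence lie in
   some w ∈ H ∖ A, and then t = s ∩ w ∈ bd ⊆ H, a contradiction. *)
Lemma Gch_bdry_P m x : Gch H m.+1 x -> Gch H m (bdry H m.+1 x) ->
  Gch A m (bdry H m.+1 (P x)).
Proof.
move=> hx hdx t nz; have [t0 tc [s [_ sc ts Pxs]]] := bdry_supp nz.
move: Pxs; rewrite ffunE; case: ifP => [/setDP[sA sK] _|]; last by rewrite eqxx.
split => //.
have tH : t \in H.
  case: (eqVneq (bdry H m.+1 x t) 0) => [dx0|/hdx[] //].
  move: nz; rewrite (restr_bdry_nz _ dx0) => /bdry_supp[_ _ [u [_ _ tu /(Gch_Q hx)[uK _]]]].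
  have [w [wH wA uw]] := closed_compl_witness uK.
  have tsw : t \subset s :&: w by rewrite subsetI ts (subset_trans tu uw).
  case: (h2 sA (notA_in_K wH wA)) => [sw0|swbd].
    by move: tsw; rewrite sw0 subset0 (negbTE t0).
  have swt : s :&: w = t.
    apply: (proper_squeeze tsw _ sc tc); rewrite properEneq subsetIl andbT.
    apply: contra sK => /eqP sws; apply: (closed_compl_down (notA_in_K wH wA)).
      by rewrite -sws subsetIr.
    exact: (subsetP hA).
  by rewrite -swt (subsetP hA) ?(subsetP bd_subA).
apply: contraT => tA.
have := h2 sA (notA_in_K tH tA); rewrite (setIidPr ts) => -[t00|].
  by rewrite t00 eqxx in t0.
by move/(subsetP bd_subA); rewrite (negbTE tA).
Qed.

Lemma Gch_bdry_Q m x : Gch H m.+1 x -> Gch H m (bdry H m.+1 x) ->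
  Gch K m (bdry H m.+1 (Q x)).
Proof.
move=> hx hdx t nz; have [_ tc [u [_ _ tu /(Gch_Q hx)[uK _]]]] := bdry_supp nz.
split => //; apply: (closed_compl_down uK tu).
case: (eqVneq (bdry H m.+1 x t) 0) => [dx0|/hdx[] //].
move: nz; rewrite -(restr_bdry_nz _ dx0) => /(Gch_bdry_P hx hdx)[tA _].
exact: (subsetP hA).
Qed.

Lemma split_Inf n x : Inf H H n x -> Inf H A n (P x) /\ Inf H K n (Q x).
Proof.
case: n => [|m] [hx hdx]; first by split; split => //; [apply: Gch_P | apply: Gch_Q].
by split; split; [apply: Gch_P | apply: Gch_bdry_P | apply: Gch_Q | apply: Gch_bdry_Q].
Qed.
End Decomposition.

Theorem mainTheorem13 (V : finType) (G : zmodType) (H A : {set {set V}})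
  (hH : hypergraph H) (hA : A \subset H)
  (h1 : forall s s', s \in H -> s' \in H -> s :&: s' = set0 \/ s :&: s' \in H)
  (h2 : forall t t', t \in A -> t' \in closed_compl H A ->
          t :&: t' = set0 \/ t :&: t' \in bd H A)
  (n : nat) :
  exists f : (rel_homology G H A n * rel_homology G H (closed_compl H A) n)%type ->
             rel_homology G H (bd H A) n,
    (forall x y, f (x + y) = f x + f y) /\ bijective f.
Proof.
set K := closed_compl H A; set X := A :\: K.
have PQ (x : chain V G) : restr X x + restr (~: X) x = x := restr_split X x.
have QP (x : chain V G) : restr (~: X) x + restr X x = x.
  by have := restr_split (~: X) x; rewrite setCK.
have hsplit m (x : chain V G) : Inf H H m x -> Inf H A m (restr X x) /\ Inf H K m (restr (~: X) x).
  by move=> hx; exact: (split_Inf hA h2 hx).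
have hsplit' m (x : chain V G) : Inf H H m x -> Inf H K m (restr (~: X) x) /\ Inf H A m (restr X x).
  by case/hsplit.
have bdKA : bd H A = K :&: A by rewrite setIC.
apply: (quot_split (@restrB _ _ X) (@restrB _ _ (~: X)) PQ).
- move=> x; exact: (rel_cycle_split (@closed_compl_sub _ H A) PQ hsplit).
- move=> x; exact: (rel_boundary_split (@closed_compl_sub _ H A) PQ hsplit).
- move=> x; rewrite /= bdKA; exact: (rel_cycle_split hA QP hsplit').
- move=> x; rewrite /= bdKA; exact: (rel_boundary_split hA QP hsplit').
- by move=> x; apply: rel_cycle_mono (@bd_subA _ H A).
- by move=> x; apply: rel_cycle_mono (@bd_subK _ H A).
- by move=> x; apply: rel_boundary_mono (@bd_subA _ H A).
- by move=> x; apply: rel_boundary_mono (@bd_subK _ H A).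
(* Cross terms are infimum chains of A, resp. K, hence boundaries. *)
move=> a b [ha _] [hb _]; split; apply: Inf_rel_boundary.
  exact: (hsplit _ _ (InfB hb ha)).1.
exact: (hsplit _ _ (InfB ha hb)).2.
Qed.
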